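(* Let $q$ be a prime power, let $h(x)\in\mathbb{F}_{q^6}[x]$, let $L(x)=\sum_i a_i x^{q^i}$ be a $q$-polynomial with all $a_i\in\mathbb{F}_q$, and let $\delta\in\mathbb{F}_{q^6}$. Write $w(x)=x^{q^2}+x^q+x+\delta$. Then the polynomial $$f(x)=h(w(x))^{q^4}-h(w(x))^{q^3}+h(w(x))^{q}-h(w(x))+L(x)$$ permutes $\mathbb{F}_{q^6}$ if and only if $L(x)$ permutes $\mathbb{F}_{q^6}$.
   Context: A polynomial permutes $\mathbb{F}_{q^6}$ if it induces a bijection of $\mathbb{F}_{q^6}$. *)

From HB Require Import structures.
From mathcomp Require Import all_boot all_order all_algebra all_field.
Set Implicit Arguments. Unset Strict Implicit. Unset Printing Implicit Defensive.
Import GRing.Theory.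
Local Open Scope ring_scope.

Definition prime_power (q : nat) : Prop :=
  exists p k : nat, prime p /\ (0 < k)%N /\ q = (p ^ k)%N.

Definition permutes (F : finFieldType) (P : {poly F}) : Prop :=
  bijective (fun x : F => P.[x]).

Definition L_qpoly (F : finFieldType) (q n : nat) (a : 'I_n -> F) : {poly F} :=
  \sum_(i < n) (a i)%:P * 'X^(q ^ i).

Definition w_poly (F : finFieldType) (q : nat) (delta : F) : {poly F} :=
  'X^(q ^ 2) + 'X^q + 'X + delta%:P.

Definition f_poly (F : finFieldType) (q : nat) (h L : {poly F}) (delta : F)
  : {poly F} :=
  let hw := h \Po w_poly q delta in
  hw ^+ (q ^ 4) - hw ^+ (q ^ 3) + hw ^+ q - hw + L.

(* Let w0(x) = x^{q^2} + x^q + x be the linear part of w and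
   g(y) = y^{q^4} - y^{q^3} + y^q - y, so that f(x) = g(h(w0 x + delta)) + L x on F.
   Since x^{q^6} = x on F_{q^6}, w0 kills the image of g, and w0 commutes with L
   because the coefficients of L lie in F_q; hence w0 o f = L o w0.  For additive
   maps this intertwining decides bijectivity: if L is injective then f x = f y
   forces w0 x = w0 y, hence L x = L y; conversely if f is onto then L maps the
   image of w0 onto itself, so a kernel element z of L has w0 z = 0 and f is
   invariant under translation by z. *)

From HB Require Import structures.
From mathcomp Require Import all_boot all_order all_algebra all_field.
From mathcomp Require Import ring.
Local Open Scope ring_scope.
Import GRing.Theory.

Lemma eq_bijective {A B : Type} {f g : A -> B} : f =1 g -> bijective f <-> bijective g.
Proof. by move=> fg; split=> /eq_bij; apply=> // x; rewrite fg. Qed.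

Lemma prime_power_pchar_nat {F : finFieldType} {q m : nat} :
  prime_power q -> #|F| = (q ^ m)%N -> (0 < m)%N -> [pchar F].-nat q.
Proof.
move=> [p [k [p_pr [_ ->]]]] card_F m_gt0.
have pF : p \in [pchar F] by apply: (card_finPcharP (n := (k * m)%N)); rewrite ?expnM.
by rewrite (eq_pnat _ (pcharf_eq pF)) pnatX pnat_id.
Qed.

Section FibredPerturbation.

Variables (V : finZmodType) (T L r : V -> V).
Hypotheses (TD : {morph T : x y / x + y}) (LD : {morph L : x y / x + y}).
Hypothesis TL : forall x, T (L x) = L (T x).
Hypothesis Tr : forall y, T (r y) = 0.

Local Notation f := (fun x => r (T x) + L x).

Lemma morph_add0 {M : V -> V} : {morph M : x y / x + y} -> M 0 = 0.
Proof. by move=> MD; apply: (addrI (M 0)); rewrite -MD !addr0. Qed.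

Lemma T_fibred x : T (f x) = L (T x).
Proof. by rewrite TD Tr add0r TL. Qed.

Lemma fibred_bij_of_bij : bijective L -> bijective f.
Proof.
move=> /bij_inj L_inj; apply: injF_bij => x y fxy.
have Txy : T x = T y by apply: L_inj; rewrite -!T_fibred fxy.
by apply: L_inj; apply: (addrI (r (T x))); rewrite fxy Txy.
Qed.

Lemma bij_of_fibred_bij : bijective f -> bijective L.
Proof.
move=> f_bij; have f_inj := bij_inj f_bij.
pose S := [set T x | x in [set: V]].
have L_inj_S : {in S &, injective L}.
  apply/imset_injP; rewrite eqn_leq leq_imset_card subset_leq_card //.
  apply/subsetP => _ /imsetP[y _ ->]; have [fi _ fK] := f_bij.
  by rewrite -(fK y) T_fibred; do 2 apply: imset_f.
have L0 := morph_add0 LD; have T0 := morph_add0 TD.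
have Lker z : L z = 0 -> z = 0.
  move=> Lz; have S0 : 0 \in S by rewrite -T0 imset_f.
  have Tz : T z = 0 by apply: L_inj_S; rewrite ?imset_f // -TL Lz T0 L0.
  by apply: f_inj; rewrite /= Tz Lz T0 L0.
apply: injF_bij => x y Lxy; apply/eqP; rewrite -subr_eq0; apply/eqP/Lker.
by apply: (addIr (L y)); rewrite -LD subrK Lxy add0r.
Qed.

Lemma fibred_bijE : bijective f <-> bijective L.
Proof. by split; [apply: bij_of_fibred_bij | apply: fibred_bij_of_bij]. Qed.

End FibredPerturbation.

Section FrobeniusPowers.

Variables (F : finFieldType) (q : nat).
Hypothesis q_pchar : [pchar F].-nat q.
Hypothesis card_F : #|F| = (q ^ 6)%N.

Lemma qpow_pchar j : [pchar F].-nat (q ^ j)%N.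
Proof. by rewrite pnatX q_pchar. Qed.

Lemma exprD_qpow j : {morph (fun x : F => x ^+ (q ^ j)) : x y / x + y}.
Proof. by move=> x y; apply/exprDn_pchar/qpow_pchar. Qed.

Lemma exprB_qpow j (x y : F) : (x - y) ^+ (q ^ j) = x ^+ (q ^ j) - y ^+ (q ^ j).
Proof. by rewrite exprD_qpow exprNn_pchar ?qpow_pchar. Qed.

Lemma expr_qpow_sum j (I : Type) (s : seq I) (P : pred I) (G : I -> F) :
  (\sum_(i <- s | P i) G i) ^+ (q ^ j) = \sum_(i <- s | P i) G i ^+ (q ^ j).
Proof.
apply: (big_morph _ (exprD_qpow j)); rewrite expr0n expn_eq0.
by case/andP: q_pchar; case: q.
Qed.

Lemma expr_qpow6 (x : F) : x ^+ (q ^ 6) = x.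
Proof. by rewrite -card_F expf_card. Qed.

Definition w_lin (x : F) := x ^+ (q ^ 2) + x ^+ (q ^ 1) + x.

Definition g_map (y : F) := y ^+ (q ^ 4) - y ^+ (q ^ 3) + y ^+ (q ^ 1) - y.

Lemma w_linD : {morph w_lin : x y / x + y}.
Proof.
by move=> x y; rewrite /w_lin !exprD_qpow; ring.
Qed.

Lemma w_lin_g_map y : w_lin (g_map y) = 0.
Proof.
by rewrite /w_lin /g_map !(exprB_qpow, exprD_qpow) -!exprM -!expnD expr_qpow6; ring.
Qed.

Lemma f_poly_hornerE (h P : {poly F}) delta x :
  (f_poly q h P delta).[x] = g_map h.[w_lin x + delta] + P.[x].
Proof. by rewrite /f_poly !hornerE horner_comp /w_poly !hornerE /g_map /w_lin expn1. Qed.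

Variables (n : nat) (a : 'I_n -> F).
Hypothesis a_fixed : forall i, a i ^+ q = a i.

Definition L_map (x : F) := \sum_(i < n) a i * x ^+ (q ^ i).

Lemma L_qpoly_hornerE x : (L_qpoly q a).[x] = L_map x.
Proof. by rewrite horner_sum; apply: eq_bigr => i _; rewrite hornerCM hornerXn. Qed.

Lemma L_mapD : {morph L_map : x y / x + y}.
Proof.
by move=> x y; rewrite -big_split; apply: eq_bigr => i _; rewrite exprD_qpow mulrDr.
Qed.

Lemma a_fixed_qpow i j : a i ^+ (q ^ j) = a i.
Proof. by elim: j => [|j IHj]; rewrite ?expr1 // expnSr exprM IHj a_fixed. Qed.

Lemma w_lin_L_map x : w_lin (L_map x) = L_map (w_lin x).
Proof.
rewrite /w_lin /L_map !expr_qpow_sum -!big_split; apply: eq_bigr => i _.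
by rewrite !exprMn !a_fixed_qpow !exprD_qpow -!exprM -!expnD !(addnC i) !mulrDr.
Qed.

End FrobeniusPowers.

Theorem mainTheorem10 (q : nat) (F : finFieldType) (n : nat)
  (h : {poly F}) (a : 'I_n -> F) (delta : F) :
  prime_power q ->
  #|F| = (q ^ 6)%N ->
  (forall i, a i ^+ q = a i) ->
  (permutes (@f_poly F q h (@L_qpoly F q n a) delta) <-> permutes (@L_qpoly F q n a)).
Proof.
move=> q_pp card_F a_fixed.
have q_pchar : [pchar F].-nat q := prime_power_pchar_nat q_pp card_F isT.
pose r y := g_map F q h.[y + delta].
have f_fibred x : (f_poly q h (L_qpoly q a) delta).[x] = r (w_lin F q x) + L_map F q n a x.
  by rewrite f_poly_hornerE L_qpoly_hornerE.
rewrite /permutes (eq_bijective f_fibred) (eq_bijective (L_qpoly_hornerE F q n a)).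
apply: fibred_bijE.
- exact: w_linD.
- exact: L_mapD.
- exact: w_lin_L_map.
- by move=> y; apply: w_lin_g_map.
Qed.
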